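(* Let $(\Omega,\mathcal F,Q)$ be a probability space and $\pi>0$. Let $c:\mathbb R\to\mathbb R$ be non-decreasing and continuous, and let $\alpha_1:\mathbb R\times\Omega\to[0,\pi]$ be $\mathcal B(\mathbb R)\otimes\mathcal F$-measurable such that $g\mapsto\alpha_1(g)(\omega)$ is non-decreasing for almost all $\omega\in\Omega$. Let $\varepsilon$ be a random variable such that the map $\mathbb R\to[0,\pi]$, $x\mapsto \mathbb E^Q(\alpha_1(x+\varepsilon))=\int_\Omega\alpha_1(x+\varepsilon(\omega'))(\omega')\,Q(d\omega')$ is continuous. For each $g\in\mathbb R$ define $f^g:[0,\pi]\to\mathbb R$ by $$f^g(a)=a-\int_\Omega\alpha_1\big(g-c(a)+\varepsilon(\omega')\big)(\omega')\,Q(d\omega').$$ Then: (i) for each $g\in\mathbb R$ there exists a unique $\alpha_0(g)\in[0,\pi]$ with $f^g(\alpha_0(g))=0$; (ii) $\alpha_0(g)=\lim_{n\to\infty}a^g_n$, where $a^g_n=\tfrac12(\overline a^g_n+\underline a^g_n)$ with $\underline a^g_0=0$, $\overline a^g_0=\pi$, and $(\overline a^g_{n+1},\underline a^g_{n+1})=(a^g_n,\underline a^g_n)$ if $f^g(a^g_n)\ge 0$, $(\overline a^g_{n+1},\underline a^g_{n+1})=(\overline a^g_n,a^g_n)$ if $f^g(a^g_n)<0$; (iii) the map $\mathbb R\to[0,\pi]$, $g\mapsto\alpha_0(g)$, is non-decreasing and continuous. *)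

From HB Require Import structures.
From mathcomp Require Import all_boot all_order all_algebra.
From mathcomp Require Import all_classical all_reals all_analysis.
Set Implicit Arguments. Unset Strict Implicit. Unset Printing Implicit Defensive.
Import Order.TTheory GRing.Theory Num.Theory.
Local Open Scope ring_scope.

Fixpoint bisect (R : realType) (F : R -> R) (pi : R) (n : nat) : R * R :=
  match n with
  | 0%N => (pi, 0)
  | n'.+1 => let p := bisect F pi n' in
             let m := (p.1 + p.2) / 2 in
             if 0 <= F m then (m, p.2) else (p.1, m)
  end.

Definition bisect_mid (R : realType) (F : R -> R) (pi : R) (n : nat) : R :=
  ((bisect F pi n).1 + (bisect F pi n).2) / 2.

From HB Require Import structures.
From mathcomp Require Import all_boot all_order all_algebra.
From mathcomp Require Import all_classical all_reals all_analysis.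
From mathcomp Require Import measurable_realfun ring lra.
Import Order.TTheory GRing.Theory Num.Theory numFieldNormedType.Exports.
Local Open Scope ring_scope.
Local Open Scope classical_set_scope.

(* Since c and x |-> E alpha1(x + eps) are non-decreasing, a |-> f^g(a) is
   strictly increasing; it is continuous, and f^g(0) <= 0 <= f^g(pi) because
   the expectation lies in [0, pi]. The intermediate value theorem gives the
   root alpha0(g), strict monotonicity its uniqueness, and bisection converges
   to it because its bracket always contains the root and halves in width.
   Raising g lowers f^g pointwise, which moves the root to the right; and
   continuity of g |-> f^g(a) for fixed a preserves the signs of f^g at
   alpha0(g) -+ e for g' near g, trapping alpha0(g') in between. *)

Section BoundedIntegral.
Context {d : measure_display} {T : measurableType d} {R : realType}.
Variables (P : probability T R) (b : R).
Implicit Types h : T -> R.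

Lemma integral_prob_bounded h : measurable_fun [set: T] h ->
  (forall w, 0 <= h w <= b) -> (0 <= \int[P]_w (h w)%:E <= b%:E)%E.
Proof.
move=> mh hb; have h_ge0 w : (0 <= (h w)%:E)%E.
  by rewrite lee_fin; case/andP: (hb w).
rewrite integral_ge0 //=.
apply: le_trans (_ : \int[P]_(w in [set: T]) b%:E <= _)%E.
  apply: ge0_le_integral => //; first exact/measurable_EFinP.
  by move=> w _; rewrite lee_fin; case/andP: (hb w).
by rewrite integral_cst //= probability_setT mule1.
Qed.

Lemma integral_prob_bounded_fin_num h : measurable_fun [set: T] h ->
  (forall w, 0 <= h w <= b) -> (\int[P]_w (h w)%:E)%E \is a fin_num.
Proof.
move=> mh /(integral_prob_bounded _ mh)/andP[h0 hb].
by rewrite ge0_fin_numE // (le_lt_trans hb) // ltry.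
Qed.

Lemma Rintegral_prob_bounded h : measurable_fun [set: T] h ->
  (forall w, 0 <= h w <= b) -> 0 <= \int[P]_w h w <= b.
Proof.
move=> mh hb; have /andP[_ Ihb] := integral_prob_bounded _ mh hb.
rewrite Rintegral_ge0 => [/=|w _]; last by case/andP: (hb w).
by rewrite -lee_fin fineK // integral_prob_bounded_fin_num.
Qed.

Lemma ae_le_Rintegral_prob_bounded h1 h2 :
  measurable_fun [set: T] h1 -> measurable_fun [set: T] h2 ->
  (forall w, 0 <= h1 w <= b) -> (forall w, 0 <= h2 w <= b) ->
  {ae P, forall w, h1 w <= h2 w} -> \int[P]_w h1 w <= \int[P]_w h2 w.
Proof.
move=> mh1 mh2 h1b h2b h12.
rewrite /Rintegral fine_le ?integral_prob_bounded_fin_num //.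
apply: ae_ge0_le_integral => //; try exact/measurable_EFinP.
- by move=> w _; rewrite lee_fin; case/andP: (h1b w).
- by move=> w _; rewrite lee_fin; case/andP: (h2b w).
- by apply: filterS h12 => w h12w _; rewrite lee_fin.
Qed.

End BoundedIntegral.

Section ShiftedExpectation.
Context {d : measure_display} {Omega : measurableType d} {R : realType}.
Variable Q : probability Omega R.
Context {M : R} {alpha1 : R -> Omega -> R} {eps : Omega -> R}.
Hypothesis measurable_alpha1 :
  measurable_fun [set: R * Omega] (fun p : R * Omega => alpha1 p.1 p.2).
Hypothesis alpha1_itv : forall g w, 0 <= alpha1 g w <= M.
Hypothesis measurable_eps : measurable_fun [set: Omega] eps.

Lemma measurable_alpha1_shift x :
  measurable_fun [set: Omega] (fun w => alpha1 (x + eps w) w).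
Proof.
apply: (measurableT_comp (f := fun p : R * Omega => alpha1 p.1 p.2)
                         (g := fun w => (x + eps w, w))) => //.
exact/measurable_fun_pair/measurable_id/measurable_funD.
Qed.

Lemma expectation_alpha1_shift_itv x :
  0 <= \int[Q]_w alpha1 (x + eps w) w <= M.
Proof.
apply: Rintegral_prob_bounded (measurable_alpha1_shift x) _ => w.
exact: alpha1_itv.
Qed.

Lemma expectation_alpha1_shift_homo :
  {ae Q, forall w, {homo (fun g => alpha1 g w) : x y / x <= y}} ->
  {homo (fun x => \int[Q]_w alpha1 (x + eps w) w) : x y / x <= y}.
Proof.
move=> alpha1_homo x y xy.
apply: (ae_le_Rintegral_prob_bounded Q M);
  try exact: measurable_alpha1_shift; try by move=> w; exact: alpha1_itv.
by apply: filterS alpha1_homo => w hw; apply: hw; rewrite lerD2r.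
Qed.

End ShiftedExpectation.

Section Bisection.
Context {R : realType} (F : R -> R) (pi : R).

Lemma bisect_width n : (bisect F pi n).1 - (bisect F pi n).2 = pi / 2 ^+ n.
Proof.
elim: n => [|n IHn]; first by rewrite /= subr0 expr0 divr1.
rewrite /= exprS invfM mulrA mulrAC -IHn.
by case: ifP => _ /=; field.
Qed.

Lemma bisect_bracket r : {homo F : x y / x < y} -> F r = 0 -> 0 <= r <= pi ->
  forall n, (bisect F pi n).2 <= r <= (bisect F pi n).1.
Proof.
move=> F_incr Fr r_itv; elim=> [//|n /andP[lo_r r_up]] /=.
have F_le := le_mono F_incr; have F_lt := leW_mono F_le.
case: ifP => [mid_ge0 | mid_lt0] /=.
- by rewrite lo_r -(F_le r) Fr mid_ge0.
- by rewrite r_up andbT ltW // -(F_lt _ r) Fr ltNge mid_lt0.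
Qed.

Lemma bisect_mid_cvg r : 0 < pi -> {homo F : x y / x < y} -> F r = 0 ->
  0 <= r <= pi -> bisect_mid F pi n @[n --> \oo] --> r.
Proof.
move=> pi_gt0 F_incr Fr r_itv.
have half_pow_cvg : (2^-1 : R) ^+ n @[n --> \oo] --> 0.
  by apply: cvg_expr; rewrite ger0_norm // invf_lt1 // ltr1n.
apply/cvgrPdist_lt => e e_gt0.
have /(cvgr_dist_lt _ _ half_pow_cvg) := divr_gt0 e_gt0 pi_gt0.
apply: filterS => n; rewrite sub0r normrN ger0_norm ?exprn_ge0 ?invr_ge0 //.
rewrite ltr_pdivlMr // exprVn mulrC -bisect_width => width_lt.
have /andP[lo_r r_up] := bisect_bracket r F_incr Fr r_itv n.
rewrite /bisect_mid; apply: le_lt_trans width_lt.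
by rewrite ler_norml; apply/andP; split; lra.
Qed.

End Bisection.

Section ParametricRoot.
Context {R : realType} (pi : R) (f : R -> R -> R).
Hypothesis pi_gt0 : 0 < pi.
Hypothesis f_incr : forall g, {homo f g : a b / a < b}.
Hypothesis f_cont : forall g, continuous (f g).
Hypothesis f_sign_ends : forall g, f g 0 <= 0 <= f g pi.
Hypothesis f_anti : forall a, {homo f^~ a : x y /~ x <= y}.
Hypothesis f_cont_param : forall a, continuous (f^~ a).

Lemma exists_param_root g : exists a, 0 <= a <= pi /\ f g a = 0.
Proof.
have /andP[f0 fpi] := f_sign_ends g.
have sign_change : Num.min (f g 0) (f g pi) <= 0 <= Num.max (f g 0) (f g pi).
  by rewrite ge_min f0 le_max fpi orbT.
have [a] := IVT (ltW pi_gt0) (continuous_subspaceT (f_cont g)) sign_change.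
by rewrite in_itv /=; exists a.
Qed.

Definition param_root g : R := xget 0 [set a | 0 <= a <= pi /\ f g a = 0].

Lemma param_root_itv g : 0 <= param_root g <= pi.
Proof. by case: (xgetPex 0 (exists_param_root g)). Qed.

Lemma f_param_root g : f g (param_root g) = 0.
Proof. by case: (xgetPex 0 (exists_param_root g)). Qed.

Lemma f_le_mono g : {mono f g : a b / a <= b}.
Proof. exact: le_mono. Qed.

Lemma f_lt_mono g : {mono f g : a b / a < b}.
Proof. exact/leW_mono/f_le_mono. Qed.

Lemma param_root_unique g a : f g a = 0 -> a = param_root g.
Proof.
move=> fa; apply/eqP.
rewrite eq_le -(f_le_mono g a) -(f_le_mono g (param_root g)).
by rewrite fa f_param_root lexx.
Qed.

Lemma param_root_homo : {homo param_root : x y / x <= y}.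
Proof.
move=> g1 g2 g12; rewrite -(f_le_mono g2) f_param_root -(f_param_root g1).
exact: f_anti.
Qed.

Lemma param_root_continuous : continuous param_root.
Proof.
move=> g; apply/cvgrPdist_lt => e e_gt0.
have f_above : 0 < f g (param_root g + e / 2).
  by rewrite -(f_param_root g) f_lt_mono ltrDl divr_gt0.
have f_below : f g (param_root g - e / 2) < 0.
  by rewrite -(f_param_root g) f_lt_mono gtrDl oppr_lt0 divr_gt0.
near=> x.
have above : 0 < f x (param_root g + e / 2).
  by near: x; exact: cvgr_gt (f_cont_param _ g) _ f_above.
have below : f x (param_root g - e / 2) < 0.
  by near: x; exact: cvgr_lt (f_cont_param _ g) _ f_below.
rewrite -(f_param_root x) f_lt_mono in above.
rewrite -(f_param_root x) f_lt_mono in below.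
by rewrite ltr_norml; apply/andP; split; lra.
Unshelve. all: by end_near.
Qed.

Lemma bisect_param_root_cvg g :
  bisect_mid (f g) pi n @[n --> \oo] --> param_root g.
Proof.
apply: bisect_mid_cvg pi_gt0 (f_incr g) (f_param_root g) _.
exact: param_root_itv.
Qed.

End ParametricRoot.

Section GapEquation.
Context {R : realType} {M : R} {c G : R -> R}.
Hypothesis c_homo : {homo c : x y / x <= y}.
Hypothesis c_cont : continuous c.
Hypothesis G_itv : forall x, 0 <= G x <= M.
Hypothesis G_homo : {homo G : x y / x <= y}.
Hypothesis G_cont : continuous G.

Local Notation gap := (fun g a : R => a - G (g - c a)).

Lemma gap_incr g : {homo gap g : a b / a < b}.
Proof.
move=> a b ab /=; have : G (g - c b) <= G (g - c a).
  by apply/G_homo; rewrite lerD2l lerN2 c_homo // ltW.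
lra.
Qed.

Lemma gap_cont g : continuous (gap g).
Proof.
move=> a; apply: cvgB => //.
apply: (continuous_comp (f := fun a => g - c a)); last exact: G_cont.
by apply: cvgB; [exact: cvg_cst | exact: c_cont].
Qed.

Lemma gap_sign_ends g : gap g 0 <= 0 <= gap g M.
Proof. by have := G_itv (g - c 0); have := G_itv (g - c M); lra. Qed.

Lemma gap_anti a : {homo gap^~ a : x y /~ x <= y}.
Proof.
move=> x y yx /=; have : G (y - c a) <= G (x - c a).
  by apply: G_homo; rewrite lerD2r.
lra.
Qed.

Lemma gap_cont_param a : continuous (gap^~ a).
Proof.
move=> x; apply: cvgB; first exact: cvg_cst.
apply: (continuous_comp (f := fun x => x - c a)); last exact: G_cont.
by apply: cvgB => //; exact: cvg_cst.
Qed.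

End GapEquation.

Theorem lemma1 (R : realType) (d : measure_display) (Omega : measurableType d)
  (Q : probability Omega R) (pi : R) (c : R -> R) (alpha1 : R -> Omega -> R)
  (eps : Omega -> R) :
  0 < pi ->
  {homo c : x y / x <= y} ->
  continuous c ->
  measurable_fun [set: R * Omega] (fun p : R * Omega => alpha1 p.1 p.2) ->
  (forall g w, 0 <= alpha1 g w <= pi) ->
  {ae Q, forall w, {homo (fun g => alpha1 g w) : x y / x <= y}} ->
  measurable_fun [set: Omega] eps ->
  continuous (fun x : R => Rintegral Q [set: Omega] (fun w => alpha1 (x + eps w) w)) ->
  let f := fun g a : R =>
    a - Rintegral Q [set: Omega] (fun w => alpha1 (g - c a + eps w) w) in
  exists alpha0 : R -> R,
    [/\ (forall g, 0 <= alpha0 g <= pi /\ f g (alpha0 g) = 0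
                   /\ (forall a, 0 <= a <= pi -> f g a = 0 -> a = alpha0 g)),
        (forall g, bisect_mid (f g) pi n @[n --> \oo] --> alpha0 g),
        {homo alpha0 : x y / x <= y} &
        continuous alpha0].
Proof.
move=> pi_gt0 c_homo c_cont m_alpha1 alpha1_itv alpha1_homo m_eps E_cont f.
pose E x := \int[Q]_w alpha1 (x + eps w) w.
have E_itv x : 0 <= E x <= pi :=
  expectation_alpha1_shift_itv Q m_alpha1 alpha1_itv m_eps x.
have E_homo : {homo E : x y / x <= y} :=
  expectation_alpha1_shift_homo Q m_alpha1 alpha1_itv m_eps alpha1_homo.
have f_incr : forall g, {homo f g : a b / a < b} := gap_incr c_homo E_homo.
have f_cont : forall g, continuous (f g) := gap_cont c_cont E_cont.
have f_sign_ends : forall g, f g 0 <= 0 <= f g pi := gap_sign_ends E_itv.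
have f_anti : forall a, {homo f^~ a : x y /~ x <= y} := gap_anti E_homo.
have f_cont_param : forall a, continuous (f^~ a) := gap_cont_param E_cont.
exists (param_root pi f); split.
- move=> g; split; first exact: param_root_itv.
  by split; [exact: f_param_root | move=> a _; exact: param_root_unique].
- exact: bisect_param_root_cvg.
- exact: param_root_homo.
- exact: param_root_continuous.
Qed.
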